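(* Let $L>0$ and consider the fourth-order ODE $$\tfrac12\,\theta=\theta^2\bigl(-\theta^{(4)}+\theta\bigr).$$ (i) There is no function $\theta\in C^4([-L,L])$, $\theta\not\equiv 0$, satisfying this ODE on $(-L,L)$ together with the boundary conditions $\theta(\pm L)=\theta'(\pm L)=0$. (ii) There is no function $\theta\in C^4(\mathbb{R})$, $\theta\not\equiv 0$, with $\theta,\theta',\theta'',\theta'''$ bounded on $\mathbb{R}$, satisfying this ODE on $\mathbb{R}$ together with $\theta(x)\to0$ as $x\to\pm\infty$.
   Context: This ODE is the profile equation for separable blow-up solutions $u(x,t)=(T-t)^{-1/2}\theta(x)$ of $u_t=u^2(-u_{xxxx}+u)$. For a solution that does not vanish, dividing by $\theta^2$, multiplying by $\theta'$ and integrating gives the first integral $\tfrac12\ln|\theta|=-\theta'''\theta+\tfrac12(\theta'')^2+\tfrac12\theta^2+C$ with a constant $C\in\mathbb{R}$. *)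

From Stdlib Require Import Reals.
Open Scope R_scope.

Definition continuous_on_closed (f : R -> R) (a b : R) : Prop :=
  forall x, a <= x <= b -> limit1_in f (fun y => a <= y <= b) (f x) x.

Definition C4_closed (L : R) (th th1 th2 th3 th4 : R -> R) : Prop :=
  (forall x, -L < x < L ->
     derivable_pt_lim th x (th1 x) /\ derivable_pt_lim th1 x (th2 x) /\
     derivable_pt_lim th2 x (th3 x) /\ derivable_pt_lim th3 x (th4 x)) /\
  continuous_on_closed th (-L) L /\ continuous_on_closed th1 (-L) L /\
  continuous_on_closed th2 (-L) L /\ continuous_on_closed th3 (-L) L /\
  continuous_on_closed th4 (-L) L.

Definition C4_R (th th1 th2 th3 th4 : R -> R) : Prop :=
  (forall x,
     derivable_pt_lim th x (th1 x) /\ derivable_pt_lim th1 x (th2 x) /\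
     derivable_pt_lim th2 x (th3 x) /\ derivable_pt_lim th3 x (th4 x)) /\
  continuity th4.

Definition bounded_R (f : R -> R) : Prop := exists M, forall x, Rabs (f x) <= M.

Definition tends_to_0_at_pinf (f : R -> R) : Prop :=
  forall eps, eps > 0 -> exists M, forall x, x > M -> Rabs (f x) < eps.
Definition tends_to_0_at_minf (f : R -> R) : Prop :=
  forall eps, eps > 0 -> exists M, forall x, x < M -> Rabs (f x) < eps.

Definition profile_ode (th th4 : R -> R) (x : R) : Prop :=
  / 2 * th x = (th x) ^ 2 * (- th4 x + th x).

From Stdlib Require Import Reals Lra Classical.
From Coquelicot Require Import Coquelicot.
Open Scope R_scope.

(* At a point where theta <> 0 the profile equation can be solved
   for the fourth derivative:  theta'''' * theta = theta^2 - 1/2.  Hence where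
   theta is small and nonzero, theta'''' * theta <= -1/4, i.e. |theta''''| is at
   least 1/(4|theta|) and theta'''' has the sign opposite to theta.
   - If a continuous solution vanishes at p but not at q, by the intermediate
     value theorem it takes arbitrarily small nonzero values between p and q,
     so theta'''' is unbounded there: impossible when theta'''' is continuous on
     the compact segment.  This settles (i) (theta(L) = 0 while theta is not
     identically zero) and the case of (ii) where theta has a zero.
   - If a solution on R never vanishes, it has constant sign; once |theta| < 1/2
     (near +oo) theta'''' keeps the opposite sign with |theta''''| >= 1/2, so
     theta''' is eventually strictly monotone at a definite rate and cannot
     stay bounded.
   Only theta(L) = 0 is used among the boundary conditions of (i), and only the
   boundedness of theta''' and the decay at +oo among the hypotheses of (ii). *)

(* Projection of R onto the segment [a,b]; composing with it extends a function
   continuous on [a,b] to a function continuous on all of R. *)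
Definition clamp (a b x : R) : R := Rmax a (Rmin b x).

Lemma clamp_in (a b x : R) : a <= b -> a <= clamp a b x <= b.
Proof. intros; unfold clamp, Rmax, Rmin; repeat destruct Rle_dec; lra. Qed.

Lemma clamp_id (a b x : R) : a <= x <= b -> clamp a b x = x.
Proof. intros; unfold clamp, Rmax, Rmin; repeat destruct Rle_dec; lra. Qed.

Lemma clamp_lipschitz (a b x y : R) :
  a <= b -> Rabs (clamp a b x - clamp a b y) <= Rabs (x - y).
Proof.
  intros; unfold clamp, Rmax, Rmin; repeat destruct Rle_dec;
  unfold Rabs; repeat destruct Rcase_abs; lra.
Qed.

Lemma continuity_clamp_extension (f : R -> R) (a b : R) :
  a <= b -> continuous_on_closed f a b -> continuity (fun x => f (clamp a b x)).
Proof.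
  intros Hab Hf c eps Heps.
  destruct (Hf (clamp a b c) (clamp_in a b c Hab) eps Heps) as [alp [Halp Hclose]].
  exists alp; split; [exact Halp|].
  intros x [_ Hdist]; simpl in *; unfold R_dist in *.
  apply Hclose; split; [apply clamp_in; exact Hab|].
  simpl; unfold R_dist.
  eapply Rle_lt_trans; [apply clamp_lipschitz; exact Hab | exact Hdist].
Qed.

Lemma continuous_bounded_on_segment (g : R -> R) (a b : R) :
  a <= b -> (forall c, a <= c <= b -> continuity_pt g c) ->
  exists M, forall x, a <= x <= b -> Rabs (g x) <= M.
Proof.
  intros Hab Hg.
  destruct (continuity_ab_maj (fun x => Rabs (g x)) a b Hab) as [xmax [Hmax _]].
  - intros c Hc. apply (continuity_pt_comp g Rabs c); [apply Hg; exact Hc | apply Rcontinuity_abs].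
  - exists (Rabs (g xmax)); exact Hmax.
Qed.

Lemma continuous_on_closed_bounded (g : R -> R) (a b : R) :
  a <= b -> continuous_on_closed g a b ->
  exists M, forall x, a <= x <= b -> Rabs (g x) <= M.
Proof.
  intros Hab Hg.
  destruct (continuous_bounded_on_segment (fun x => g (clamp a b x)) a b Hab)
    as [M HM].
  { intros c _; apply continuity_clamp_extension; assumption. }
  exists M; intros x Hx; rewrite <- (clamp_id a b x Hx); exact (HM x Hx).
Qed.

Lemma small_nonzero_value (f : R -> R) (p q r : R) :
  continuity f -> f p = 0 -> f q <> 0 -> 0 < r ->
  exists z, Rmin p q <= z <= Rmax p q /\ f z <> 0 /\ Rabs (f z) <= r.
Proof.
  intros Hf Hp Hq Hr.
  set (s := r / (r + Rabs (f q))).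
  assert (Hfq : 0 < Rabs (f q)) by (apply Rabs_pos_lt; exact Hq).
  assert (Hs : 0 < s < 1).
  { unfold s; split; [apply Rdiv_lt_0_compat; lra|].
    apply Rlt_div_l; lra. }
  assert (Hsize : s * Rabs (f q) <= r).
  { assert (Hscale : s * (r + Rabs (f q)) = r) by (unfold s; field; lra).
    nra. }
  destruct (IVT_gen f p q (s * f q) Hf) as [z [Hz Hfz]].
  { rewrite Hp; unfold Rmin, Rmax; repeat destruct Rle_dec;
    destruct (Rle_lt_dec 0 (f q)); nra. }
  exists z; split; [exact Hz|]; rewrite Hfz; split.
  - apply Rmult_integral_contrapositive; split; [lra|exact Hq].
  - rewrite Rabs_mult, Rabs_right by lra; exact Hsize.
Qed.

Lemma nonvanishing_constant_sign (f : R -> R) :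
  continuity f -> (forall x, f x <> 0) -> forall x y, 0 < f x * f y.
Proof.
  intros Hf Hnz x y. apply Rnot_le_lt; intro Hle.
  destruct (IVT_gen f x y 0 Hf) as [z [_ Hz]].
  { unfold Rmin, Rmax; destruct Rle_dec; nra. }
  exact (Hnz z Hz).
Qed.

(* A bounded function cannot have a derivative bounded below by a positive
   constant on a half-line: by the mean value theorem it would grow without
   bound. *)
Lemma bounded_function_derivative_not_above (h k : R -> R) (B m A : R) :
  (forall x, derivable_pt_lim h x (k x)) -> (forall x, Rabs (h x) <= B) ->
  0 < m -> (forall x, A < x -> m <= k x) -> False.
Proof.
  intros Hder Hbound Hm Hk.
  set (a := A + 1). set (b := a + (2 * B + 1) / m).
  assert (HB : 0 <= B) by (pose proof (Hbound 0); pose proof (Rabs_pos (h 0)); lra).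
  assert (Hlen : m * (b - a) = 2 * B + 1) by (unfold b; field; lra).
  assert (Hab : a < b).
  { assert (0 < (2 * B + 1) / m) by (apply Rdiv_lt_0_compat; lra).
    unfold b; lra. }
  destruct (MVT_cor2 h k a b Hab) as [c [Hmvt Hc]]; [intros; apply Hder|].
  assert (Hkc : m <= k c) by (apply Hk; unfold a in Hc; lra).
  pose proof (proj1 (Rabs_le_between _ _) (Hbound a)).
  pose proof (proj1 (Rabs_le_between _ _) (Hbound b)).
  nra.
Qed.

Lemma ode_near_zero (th th4 : R -> R) (x : R) :
  profile_ode th th4 x -> th x <> 0 -> th x ^ 2 <= / 4 -> th4 x * th x <= - / 4.
Proof.
  unfold profile_ode; intros Hode Hnz Hsmall.
  assert (Hfourth : th4 x * th x = th x ^ 2 - / 2).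
  { apply Rmult_eq_reg_l with (th x); [|exact Hnz].
    transitivity (th x ^ 2 * th x - / 2 * th x); [|ring].
    rewrite Hode; ring. }
  lra.
Qed.

Lemma ode_fourth_opposes (th th4 : R -> R) (x : R) :
  profile_ode th th4 x -> Rabs (th x) < / 2 ->
  (0 < th x -> th4 x <= - / 2) /\ (th x < 0 -> / 2 <= th4 x).
Proof.
  intros Hode Habs.
  assert (Hsq : forall t, Rabs t < / 2 -> t ^ 2 <= / 4).
  { intros t Ht; pose proof (Rabs_def2 _ _ Ht); nra. }
  split; intro Hsign;
    pose proof (ode_near_zero th th4 x Hode ltac:(lra) (Hsq _ Habs));
    pose proof (Rabs_def2 _ _ Habs); nra.
Qed.

Lemma solution_cannot_reach_zero (th th4 : R -> R) (p q M : R) :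
  continuity th -> th p = 0 -> th q <> 0 ->
  (forall x, Rmin p q <= x <= Rmax p q -> Rabs (th4 x) <= M) ->
  (forall x, Rmin p q <= x <= Rmax p q -> th x <> 0 -> profile_ode th th4 x) ->
  False.
Proof.
  intros Hc Hp Hq HM Hode.
  set (r := / (4 * (Rabs M + 1))).
  assert (HMpos : 0 < 4 * (Rabs M + 1)) by (pose proof (Rabs_pos M); lra).
  assert (Hr : 0 < r) by (apply Rinv_0_lt_compat; exact HMpos).
  assert (Hr_scale : r * (4 * (Rabs M + 1)) = 1) by (apply Rinv_l; lra).
  destruct (small_nonzero_value th p q r Hc Hp Hq Hr) as [z [Hz [Hnz Hsmall]]].
  assert (Hr_quarter : r <= / 4) by (pose proof (Rabs_pos M); nra).
  assert (Hblowup : th4 z * th z <= - / 4).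
  { apply (ode_near_zero th th4 z (Hode z Hz Hnz) Hnz).
    pose proof (proj1 (Rabs_le_between _ _) Hsmall); nra. }
  assert (Hbounded : Rabs (th4 z * th z) <= Rabs M * r).
  { rewrite Rabs_mult; apply Rmult_le_compat; try apply Rabs_pos; [|exact Hsmall].
    eapply Rle_trans; [apply HM, Hz | apply Rle_abs]. }
  pose proof (Rabs_pos M); pose proof (Rle_abs (- (th4 z * th z))).
  rewrite Rabs_Ropp in *; nra.
Qed.

Lemma nonvanishing_solution_not_decaying (th th3 th4 : R -> R) (B : R) :
  continuity th -> (forall x, derivable_pt_lim th3 x (th4 x)) ->
  (forall x, Rabs (th3 x) <= B) -> (forall x, th x <> 0) ->
  (forall x, profile_ode th th4 x) -> tends_to_0_at_pinf th -> False.
Proof.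
  intros Hc Hder3 HB Hnz Hode Hdecay.
  destruct (Hdecay (/ 2) ltac:(lra)) as [A HA].
  pose proof (nonvanishing_constant_sign th Hc Hnz) as Hsign.
  destruct (Rlt_or_le 0 (th 0)) as [Hpos | Hneg].
  - apply (bounded_function_derivative_not_above
             (fun x => - th3 x) (fun x => - th4 x) B (/ 2) A).
    + intro x; apply derivable_pt_lim_opp, Hder3.
    + intro x; rewrite Rabs_Ropp; apply HB.
    + lra.
    + intros x Hx; pose proof (Hsign x 0).
      assert (Hx_pos : 0 < th x) by nra.
      pose proof (proj1 (ode_fourth_opposes th th4 x (Hode x) (HA x Hx)) Hx_pos); lra.
  - apply (bounded_function_derivative_not_above th3 th4 B (/ 2) A Hder3 HB).
    + lra.
    + intros x Hx; pose proof (Hsign x 0); pose proof (Hnz 0).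
      assert (Hx_neg : th x < 0) by (destruct (Req_dec (th 0) 0); [contradiction|nra]).
      exact (proj2 (ode_fourth_opposes th th4 x (Hode x) (HA x Hx)) Hx_neg).
Qed.

Theorem proposition2p1 (L : R) (HL : 0 < L) :
  (~ exists th th1 th2 th3 th4 : R -> R,
       C4_closed L th th1 th2 th3 th4 /\
       (exists x, -L <= x <= L /\ th x <> 0) /\
       (forall x, -L < x < L -> profile_ode th th4 x) /\
       th (-L) = 0 /\ th L = 0 /\ th1 (-L) = 0 /\ th1 L = 0)
  /\
  (~ exists th th1 th2 th3 th4 : R -> R,
       C4_R th th1 th2 th3 th4 /\
       (exists x, th x <> 0) /\
       bounded_R th /\ bounded_R th1 /\ bounded_R th2 /\ bounded_R th3 /\
       (forall x, profile_ode th th4 x) /\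
       tends_to_0_at_pinf th /\ tends_to_0_at_minf th).
Proof.
  split.
  - intros [th [th1 [th2 [th3 [th4 [[_ [Hc0 [_ [_ [_ Hc4]]]]]
             [[x0 [Hx0 Hnz0]] [Hode [Hthm [HthL _]]]]]]]]]].
    destruct (continuous_on_closed_bounded th4 (-L) L ltac:(lra) Hc4) as [M HM].
    assert (Hsegment : forall x, Rmin L x0 <= x <= Rmax L x0 -> -L <= x <= L).
    { intros x; unfold Rmin, Rmax; destruct Rle_dec; lra. }
    apply (solution_cannot_reach_zero (fun x => th (clamp (-L) L x)) th4 L x0 M).
    + apply continuity_clamp_extension; [lra | exact Hc0].
    + rewrite clamp_id by lra; exact HthL.
    + rewrite clamp_id by lra; exact Hnz0.
    + intros x Hx; apply HM, Hsegment, Hx.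
    + intros x Hx; unfold profile_ode; rewrite clamp_id by (apply Hsegment, Hx).
      intro Hnz; apply Hode.
      destruct (Hsegment x Hx); split; apply Rnot_le_lt; intro Hend; apply Hnz;
        [replace x with (-L) by lra | replace x with L by lra]; assumption.
  - intros [th [th1 [th2 [th3 [th4 [[Hder Hc4] [[x0 Hnz0]
             [_ [_ [_ [[B HB] [Hode [Hdecay _]]]]]]]]]]]]].
    assert (Hc : continuity th).
    { intro x; apply (derivable_continuous_pt th x (exist _ (th1 x) (proj1 (Hder x)))). }
    destruct (classic (exists z, th z = 0)) as [[z Hz] | Hnone].
    + destruct (continuous_bounded_on_segment th4 (Rmin z x0) (Rmax z x0))
        as [M HM]; [apply Rmin_Rmax | intros; apply Hc4 |].
      exact (solution_cannot_reach_zero th th4 z x0 M Hc Hz Hnz0 HM (fun x _ _ => Hode x)).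
    + apply (nonvanishing_solution_not_decaying th th3 th4 B Hc); auto.
      * intro x; apply Hder.
      * intros x Hx; apply Hnone; exists x; exact Hx.
Qed.
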